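(* Let $\Sigma$ be a first-order language and let $\mathcal{T}_\Sigma$ be the family of all complete theories in $\Sigma$ (in the sense described in the context). Then $\mathcal{T}_\Sigma$ is $e$-minimal if and only if either $\Sigma=\emptyset$ or $\Sigma$ consists of exactly one constant symbol.
   Context: Theories are complete consistent first-order theories; structures have nonempty universes. If $\Sigma$ is relational, $\mathcal{T}_\Sigma$ is the family of all complete theories of $\Sigma$-structures. If $\Sigma$ contains function symbols (constants being $0$-ary function symbols), each $n$-ary function symbol $f$ is replaced by an $(n+1)$-ary predicate symbol $R_f$ interpreted as the graph $\{(\bar a,b)\mid f(\bar a)=b\}$, and $\mathcal{T}_\Sigma$ is the family of all complete theories of $\Sigma$-structures viewed in this relational language $\Sigma'$. For a family $\mathcal{T}$ of theories and a sentence $\varphi$ of its language, $\mathcal{T}_\varphi=\{T\in\mathcal{T}\mid \varphi\in T\}$. A family $\mathcal{T}$ is called $e$-minimal if it is infinite and for every sentence $\varphi$ of its language, $\mathcal{T}_\varphi$ is finite or $\mathcal{T}_{\neg\varphi}$ is finite. *)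

From Stdlib Require List.
From mathcomp Require Import all_boot.


Unset Printing Implicit Defensive.

(** * Signatures: relation symbols and function symbols (constants = 0-ary
    function symbols), each with an arity.  The symbol sets are arbitrary types
    (a language may be infinite). *)
Record signature := Signature {
  Rsym : Type;
  Fsym : Type;
  rar : Rsym -> nat;
  far : Fsym -> nat
}.
Arguments rar {s}.
Arguments far {s}.

(** The relational language Sigma' : every relation symbol R of Sigma is kept,
    and every n-ary function symbol f becomes an (n+1)-ary predicate symbol R_f. *)
Definition rsym' (S : signature) : Type := (Rsym S + Fsym S)%type.

Definition rar' {S : signature} (s : rsym' S) : nat :=
  match s with
  | inl r => rar r
  | inr f => (far f).+1
  end.

Inductive form (S : signature) : Type :=
| FBot : form S
| FEq : nat -> nat -> form S
| FRel : forall s : rsym' S, ('I_(rar' s) -> nat) -> form S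
| FNeg : form S -> form S
| FAnd : form S -> form S -> form S
| FOr : form S -> form S -> form S
| FImp : form S -> form S -> form S
| FAll : nat -> form S -> form S
| FEx : nat -> form S -> form S.

Arguments FBot {S}.
Arguments FEq {S}.
Arguments FRel {S}.
Arguments FNeg {S}.
Arguments FAnd {S}.
Arguments FOr {S}.
Arguments FImp {S}.
Arguments FAll {S}.
Arguments FEx {S}.

Fixpoint free_in {S : signature} (x : nat) (phi : form S) : Prop :=
  match phi with
  | FBot => False
  | FEq a b => x = a \/ x = b
  | FRel _ v => exists i, v i = x
  | FNeg p => free_in x p
  | FAnd p q | FOr p q | FImp p q => free_in x p \/ free_in x q
  | FAll y p | FEx y p => x <> y /\ free_in x p
  end.

Definition sentence {S : signature} (phi : form S) : Prop :=
  forall x, ~ free_in x phi.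

Record structure (S : signature) := Structure {
  dom : Type;
  dom_inh : dom;
  rint : forall r : Rsym S, ('I_(rar r) -> dom) -> Prop;
  fint : forall f : Fsym S, ('I_(far f) -> dom) -> dom
}.
Arguments dom {S}.
Arguments dom_inh {S}.
Arguments rint {S}.
Arguments fint {S}.

Definition upd {D : Type} (e : nat -> D) (x : nat) (d : D) : nat -> D :=
  fun y => if y == x then d else e y.

(** Interpretation of the Sigma'-atoms in a Sigma-structure: R_f is the graph
    {(a, b) | f(a) = b} of f. *)
Definition atom_sat {S : signature} (M : structure S) (s : rsym' S)
  : ('I_(rar' s) -> dom M) -> Prop :=
  match s as s0 return ('I_(rar' s0) -> dom M) -> Prop with
  | inl r => fun a => rint M r a
  | inr f => fun a =>
      fint M f (fun i : 'I_(far f) => a (widen_ord (leqnSn (far f)) i)) = a ord_max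
  end.

Fixpoint sat {S : signature} (M : structure S) (e : nat -> dom M) (phi : form S)
  : Prop :=
  match phi with
  | FBot => False
  | FEq a b => e a = e b
  | FRel s v => atom_sat M s (fun i => e (v i))
  | FNeg p => ~ sat M e p
  | FAnd p q => sat M e p /\ sat M e q
  | FOr p q => sat M e p \/ sat M e q
  | FImp p q => sat M e p -> sat M e q
  | FAll x p => forall d : dom M, sat M (upd e x d) p
  | FEx x p => exists d : dom M, sat M (upd e x d) p
  end.

Definition theory (S : signature) := form S -> Prop.

Definition Th {S : signature} (M : structure S) : theory S :=
  fun phi => sentence phi /\ forall e : nat -> dom M, sat M e phi.

Definition T_Sigma (S : signature) : theory S -> Prop :=
  fun T => exists M : structure S, forall phi, T phi <-> Th M phi.

Definition family (S : signature) := theory S -> Prop.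

Definition finite_family {S : signature} (F : family S) : Prop :=
  exists l : seq (theory S),
    forall T, F T -> exists2 T', List.In T' l & forall phi, T phi <-> T' phi.

Definition infinite_family {S : signature} (F : family S) : Prop :=
  ~ finite_family F.

Definition fam_restr {S : signature} (F : family S) (phi : form S) : family S :=
  fun T => F T /\ T phi.

Definition e_minimal {S : signature} (F : family S) : Prop :=
  infinite_family F /\
  forall phi : form S, sentence phi ->
    finite_family (fam_restr F phi) \/ finite_family (fam_restr F (FNeg phi)).

Definition empty_signature (S : signature) : Prop :=
  (Rsym S -> False) /\ (Fsym S -> False).

Definition one_constant_signature (S : signature) : Prop :=
  (Rsym S -> False) /\ exists c : Fsym S, far c = 0 /\ forall f : Fsym S, f = c.

From mathcomp Require Import all_boot zify.
From Stdlib Require Import Classical ClassicalEpsilon FunctionalExtensionality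
  PropExtensionality.
From Stdlib Require List.

(* If the signature has a relation symbol R, a function symbol f of positive
   arity, or two function symbols f <> g, then the sentence
   forall x, R(x,..,x), resp. forall x, f(x,..,x) = x, resp.
   exists x, f(x,..,x) = x /\ g(x,..,x) = x holds in finite structures of every
   size and fails in other finite structures of every size; as the theory of a
   finite structure determines its size, both T_phi and T_~phi are infinite.
   Otherwise there is at most one constant, and a back-and-forth argument shows
   that two structures agreeing on "there are at least j elements" for all
   j <= n + 1 satisfy the same sentences of quantifier depth n. Hence a sentence
   phi has one truth value in all structures with more than qd(phi) elements,
   the smaller ones have at most qd(phi) theories, and so one of T_phi, T_~phi
   is finite, while the finite structures give infinitely many theories. *)

Definition card_ge (T : Type) (n : nat) : Prop :=
  exists s : list T, List.NoDup s /\ length s = n.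

Definition card_eq (T : Type) (n : nat) : Prop := card_ge T n /\ ~ card_ge T n.+1.

Definition card_agree_upto (X Y : Type) (N : nat) : Prop :=
  forall j, j <= N -> (card_ge X j <-> card_ge Y j).

Lemma card_ge_le {T : Type} {m n : nat} : card_ge T n -> m <= n -> card_ge T m.
Proof.
move=> [s [s_uniq <-]] le_mn; exists (List.firstn m s); split.
- rewrite -(List.firstn_skipn m s) in s_uniq; exact: List.NoDup_app_remove_r s_uniq.
- rewrite List.firstn_length_le //; lia.
Qed.

Lemma card_ge_of_injective {T : Type} (f : nat -> T) {n : nat} :
  (forall i j, i < n -> j < n -> f i = f j -> i = j) -> card_ge T n.
Proof.
move=> f_inj; exists (List.map f (List.seq 0 n)).
split; last by rewrite List.length_map List.length_seq.
apply: List.NoDup_map_NoDup_ForallPairs; last exact: List.seq_NoDup.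
by move=> i j /List.in_seq [_ lt_i] /List.in_seq [_ lt_j]; apply: f_inj; lia.
Qed.

Lemma card_ge1 {T : Type} : T -> card_ge T 1.
Proof. by move=> t; apply: (card_ge_of_injective (fun=> t)) => i j; lia. Qed.

Lemma card_ge_nat n : card_ge nat n.
Proof. exact: (card_ge_of_injective id). Qed.

Lemma card_ge_ord n j : card_ge 'I_n j <-> j <= n.
Proof.
split=> [[s [s_uniq <-]]|le_jn].
- have val_uniq : List.NoDup (List.map (@nat_of_ord n) s).
    by apply: List.NoDup_map_NoDup_ForallPairs s_uniq => i k _ _; apply: ord_inj.
  have val_sub : List.incl (List.map (@nat_of_ord n) s) (List.seq 0 n).
    move=> _ /List.in_map_iff [i [<- _]]; apply/List.in_seq.
    by have := ltn_ord i; lia.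
  have := List.NoDup_incl_length val_uniq val_sub.
  by rewrite List.length_map List.length_seq; lia.
- case: n le_jn => [|m] le_jm.
  + by exists [::]; split; [exact: List.NoDup_nil | rewrite /=; lia].
  + apply: (card_ge_of_injective (@inord m)) => i k lt_ij lt_kj /(congr1 val).
    by rewrite /= !inordK; lia.
Qed.

Lemma card_eq_ge {T : Type} {n : nat} : card_eq T n -> forall j, card_ge T j <-> j <= n.
Proof.
move=> [T_n T_n1] j; split=> [T_j|le_jn]; last exact: card_ge_le T_n le_jn.
by case: (leqP j n) => // lt_nj; case: T_n1; apply: card_ge_le T_j lt_nj.
Qed.

Lemma card_eq_ord n k : card_eq 'I_n k <-> k = n.
Proof. by rewrite /card_eq !card_ge_ord; split=> [[]|->]; lia. Qed.

Lemma card_ge_or_eq (T : Type) N : card_ge T N \/ exists2 n, n < N & card_eq T n.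
Proof.
elim: N => [|N [T_N|[n lt_nN T_n]]].
- by left; exists [::]; split; constructor.
- by case: (classic (card_ge T N.+1)) => [|T_N1]; [left | right; exists N].
- by right; exists n => //; lia.
Qed.

Lemma card_ge_fresh {T : Type} {n : nat} {s : list T} :
  card_ge T n.+1 -> length s <= n -> exists x, ~ List.In x s.
Proof.
move=> [l [l_uniq l_len]] s_len; apply: NNPP => all_in.
have l_sub : List.incl l s by move=> x _; apply: NNPP => x_out; apply: all_in; exists x.
have := List.NoDup_incl_length l_uniq l_sub; lia.
Qed.

Definition partial_bij {X Y : Type} (P : list (X * Y)) : Prop :=
  forall p q, List.In p P -> List.In q P -> (p.1 = q.1 <-> p.2 = q.2).

Definition swap_pairs {X Y : Type} (P : list (X * Y)) : list (Y * X) :=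
  List.map (fun p => (p.2, p.1)) P.

Lemma swap_pairsK (X Y : Type) (P : list (X * Y)) : swap_pairs (swap_pairs P) = P.
Proof. by elim: P => [|[x y] P /= ->]. Qed.

Lemma partial_bij_swap {X Y : Type} {P : list (X * Y)} :
  partial_bij P -> partial_bij (swap_pairs P).
Proof.
move=> bijP _ _ /List.in_map_iff [p [<- Pp]] /List.in_map_iff [q [<- Pq]] /=.
by have := bijP p q Pp Pq; tauto.
Qed.

Lemma partial_bij_cons {X Y : Type} (P : list (X * Y)) a b :
  partial_bij P -> (forall q, List.In q P -> (a = q.1 <-> b = q.2)) ->
  partial_bij ((a, b) :: P).
Proof.
move=> bijP abP p q [<-|Pp] [<-|Pq] /=; [tauto | exact: abP | | exact: bijP].
by have [ab ba] := abP p Pp; split=> /esym ?; apply/esym; auto.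
Qed.

Lemma fst_uniq_sublist {X Y : Type} (P : list (X * Y)) : exists Q,
  [/\ List.incl Q P, List.NoDup (List.map fst Q),
      forall p, List.In p P -> exists2 q, List.In q Q & q.1 = p.1
    & length Q <= length P].
Proof.
elim: P => [|p P [Q [QP Q_uniq Q_cover lenQ]]].
  by exists [::]; split => //; constructor.
case: (classic (exists2 q, List.In q Q & q.1 = p.1)) => [[q Qq qp]|p_new].
- exists Q; split => //=; [by move=> r /QP; right | | lia].
  by move=> r [<-|/Q_cover]; [exists q|].
- exists (p :: Q); split => /=; [|constructor| |lia].
  + by move=> r [<-|/QP]; [left | right].
  + by move=> /List.in_map_iff [q [qp Qq]]; apply: p_new; exists q.
  + by [].
  + by move=> r [<-|/Q_cover [q Qq qr]]; [exists p; [left|] | exists q; [right|]].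
Qed.

Lemma partial_bij_forth {X Y : Type} {P : list (X * Y)} {N : nat} :
  partial_bij P -> length P < N -> (forall j, j <= N -> card_ge X j -> card_ge Y j) ->
  forall a, exists b, partial_bij ((a, b) :: P).
Proof.
move=> bijP lenP XY a.
case: (classic (exists2 q, List.In q P & q.1 = a)) => [[q Pq <-]|a_new].
  by exists q.2; apply: partial_bij_cons => // p Pp; apply: bijP.
have [Q [QP Q_uniq Q_cover lenQ]] := fst_uniq_sublist P.
have [b b_new] : exists b, ~ List.In b (List.map snd Q).
  apply: (card_ge_fresh (n := length Q)); last by rewrite List.length_map.
  apply: XY; first lia.
  exists (a :: List.map fst Q); split; last by rewrite /= List.length_map.
  by constructor => // /List.in_map_iff [q [qa Qq]]; apply: a_new; exists q; auto.
exists b; apply: partial_bij_cons => // p Pp; split=> ab_p; exfalso.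
  by apply: a_new; exists p.
have [q Qq qp] := Q_cover p Pp; apply: b_new; apply/List.in_map_iff; exists q.
by split=> //; rewrite ab_p; apply/(bijP q p) => //; apply: QP.
Qed.

Lemma partial_bij_back {X Y : Type} {P : list (X * Y)} {N : nat} :
  partial_bij P -> length P < N -> (forall j, j <= N -> card_ge Y j -> card_ge X j) ->
  forall b, exists a, partial_bij ((a, b) :: P).
Proof.
move=> bijP lenP YX b.
have lenP' : length (swap_pairs P) < N by rewrite List.length_map.
have [a bij_ba] := partial_bij_forth (partial_bij_swap bijP) lenP' YX b.
by exists a; rewrite -[P]swap_pairsK; apply: (partial_bij_swap bij_ba).
Qed.

Lemma quantifiers_iff_of_bitotal {X Y : Type} {R : X -> Y -> Prop}
    {Q : X -> Prop} {Q' : Y -> Prop} :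
  (forall x y, R x y -> (Q x <-> Q' y)) ->
  (forall x, exists y, R x y) -> (forall y, exists x, R x y) ->
  ((forall x, Q x) <-> (forall y, Q' y)) /\ ((exists x, Q x) <-> (exists y, Q' y)).
Proof.
move=> RQ forth back; split; split.
- by move=> allQ y; have [x Rxy] := back y; apply/(RQ x y Rxy).
- by move=> allQ' x; have [y Rxy] := forth x; apply/(RQ x y Rxy).
- by move=> [x Qx]; have [y Rxy] := forth x; exists y; apply/(RQ x y Rxy).
- by move=> [y Qy]; have [x Rxy] := back y; exists x; apply/(RQ x y Rxy).
Qed.

(** * Back and forth *)

Fixpoint quant_depth {S : signature} (phi : form S) : nat :=
  match phi with
  | FBot | FEq _ _ | FRel _ _ => 0
  | FNeg p => quant_depth p
  | FAnd p q | FOr p q | FImp p q => maxn (quant_depth p) (quant_depth q)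
  | FAll _ p | FEx _ p => (quant_depth p).+1
  end.

Section BackAndForth.

Context {S : signature} (no_rel : Rsym S -> False).

Definition fint_related {A B : structure S} (P : list (dom A * dom B)) : Prop :=
  forall f v w, List.In (fint A f v, fint B f w) P.

(* [P] is a position of an Ehrenfeucht-Fraisse game: a partial bijection matching
   the free variables and the constants, with room for one more pair per
   quantifier of [phi] before the bound [N] is reached. *)
Definition ef_equiv (A B : structure S) N (phi : form S) : Prop :=
  forall P e e', partial_bij P -> fint_related P ->
  (forall x, free_in x phi -> List.In (e x, e' x) P) ->
  length P + quant_depth phi <= N -> (sat A e phi <-> sat B e' phi).

Lemma ef_equiv_connectives {A B : structure S} {N : nat} {p q : form S} :
  ef_equiv A B N p -> ef_equiv A B N q ->
  [/\ ef_equiv A B N (FAnd p q), ef_equiv A B N (FOr p q) & ef_equiv A B N (FImp p q)].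
Proof.
move=> IHp IHq; split=> P e e' bijP relP freeP /= lenP.
all: have := IHp P e e' bijP relP (fun x x_p => freeP x (or_introl x_p)) ltac:(lia).
all: have := IHq P e e' bijP relP (fun x x_q => freeP x (or_intror x_q)) ltac:(lia).
all: tauto.
Qed.

Lemma ef_equiv_quant {A B : structure S} {N : nat} x {p : form S} :
  card_agree_upto (dom A) (dom B) N -> ef_equiv A B N p ->
  ef_equiv A B N (FAll x p) /\ ef_equiv A B N (FEx x p).
Proof.
move=> agreeAB IH.
suff quant_iff P e e' : partial_bij P -> fint_related P ->
    (forall y, y <> x /\ free_in y p -> List.In (e y, e' y) P) ->
    length P + (quant_depth p).+1 <= N ->
    (sat A e (FAll x p) <-> sat B e' (FAll x p)) /\
    (sat A e (FEx x p) <-> sat B e' (FEx x p)).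
  by split=> P e e' bijP relP freeP lenP; have [] := quant_iff P e e' bijP relP freeP lenP.
move=> bijP relP freeP lenP.
apply: (quantifiers_iff_of_bitotal (R := fun d d' => partial_bij ((d, d') :: P))).
- move=> d d' bij_d.
  apply: (IH ((d, d') :: P)) => // [f v w|y y_p|]; [by right | | rewrite /=; lia].
  by rewrite /upd; case: eqP => [_|y_x]; [left | right; apply: freeP].
- apply: (partial_bij_forth bijP (N := N)) => [|j le_jN]; first lia.
  by case: (agreeAB j le_jN).
- apply: (partial_bij_back bijP (N := N)) => [|j le_jN]; first lia.
  by case: (agreeAB j le_jN).
Qed.

Lemma ef_equiv_of_card_agree {A B : structure S} {N : nat} :
  card_agree_upto (dom A) (dom B) N -> forall phi, ef_equiv A B N phi.
Proof.
move=> agreeAB; elim=> [|a b|[r|f] v|p IH|p IHp q IHq|p IHp q IHq|p IHp q IHq|x p IH|x p IH].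
- by [].
- move=> P e e' bijP _ freeP _.
  by apply: (bijP (e a, e' a) (e b, e' b)); apply: freeP; [left | right].
- by case: (no_rel r).
- move=> P e e' bijP relP freeP _.
  (* [R_f] says that its last argument is the value of the constant [f]. *)
  exact: (bijP _ _ (relP f _ _) (freeP (v ord_max) (ex_intro _ ord_max erefl))).
- by move=> P e e' bijP relP freeP lenP /=; rewrite (IH P e e').
- by case: (ef_equiv_connectives IHp IHq).
- by case: (ef_equiv_connectives IHp IHq).
- by case: (ef_equiv_connectives IHp IHq).
- by case: (ef_equiv_quant x agreeAB IH).
- by case: (ef_equiv_quant x agreeAB IH).
Qed.

End BackAndForth.

Lemma upd_eq {D : Type} (e : nat -> D) x d : upd e x d x = d.
Proof. by rewrite /upd eqxx. Qed.

Lemma upd_neq {D : Type} (e : nat -> D) x d y : y <> x -> upd e x d y = e y.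
Proof. by rewrite /upd; case: eqP. Qed.

Fixpoint distinct_from {S : signature} (j i : nat) : form S :=
  if i is i'.+1 then FAnd (distinct_from j i') (FNeg (FEq j i')) else FNeg FBot.

Fixpoint exists_distinct {S : signature} (m j : nat) : form S :=
  if m is m'.+1 then FEx j (FAnd (distinct_from j j) (exists_distinct m' j.+1))
  else FNeg FBot.

Definition at_least {S : signature} (m : nat) : form S := exists_distinct m 0.

Lemma sat_distinct_from S (M : structure S) e j i :
  sat M e (distinct_from j i) <-> forall k, k < i -> e j <> e k.
Proof.
elim: i => [|i IH] /=; first by split=> // _ [].
rewrite IH; split=> [[ne_j ne_ji] k|ne_j]; last by split=> [k lt_ki|]; apply: ne_j; lia.
by rewrite ltnS leq_eqVlt => /orP [/eqP ->|/ne_j].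
Qed.

Lemma free_distinct_from S x j i : free_in x (@distinct_from S j i) -> x = j \/ x < i.
Proof. by elim: i => [|i IH] //= [/IH|[|]]; lia. Qed.

Lemma free_exists_distinct S m j x : free_in x (@exists_distinct S m j) -> x < j.
Proof. by elim: m j => [|m IH] j //= [x_j [/free_distinct_from|/IH]]; lia. Qed.

Lemma at_least_sentence S m : sentence (@at_least S m).
Proof. by move=> x /free_exists_distinct. Qed.

Lemma sat_exists_distinct S (M : structure S) m j e :
  sat M e (exists_distinct m j) <->
  exists s, [/\ List.NoDup s, length s = m & forall k, k < j -> ~ List.In (e k) s].
Proof.
elim: m j e => [|m IH] j e /=.
  by split=> [_|_ []]; exists [::]; split=> // [|k _ []]; constructor.
split=> [[d [/sat_distinct_from d_new /IH [s [s_uniq s_len s_new]]]]|].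
- exists (d :: s); split=> /=; [constructor | by rewrite s_len |].
  + by have := s_new j (ltnSn j); rewrite upd_eq.
  + by [].
  + move=> k lt_kj; have k_j : k <> j by lia.
    case=> [ek_d|ek_s].
    * by apply: (d_new k lt_kj); rewrite upd_eq upd_neq.
    * by apply: (s_new k (ltnW lt_kj)); rewrite upd_neq.
- move=> [[|d s] [ds_uniq //= [s_len] ds_new]].
  move/List.NoDup_cons_iff: ds_uniq => [d_s s_uniq].
  exists d; split.
  + apply/sat_distinct_from => k lt_kj; rewrite upd_eq upd_neq; last lia.
    by move=> d_ek; apply: (ds_new k lt_kj); left.
  + apply/IH; exists s; split=> // k; rewrite ltnS leq_eqVlt => /orP [/eqP ->|lt_kj].
      by rewrite upd_eq.
    by rewrite upd_neq; [move=> ek_s; apply: (ds_new k lt_kj); right | lia].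
Qed.

Lemma sat_at_least S (M : structure S) m e : sat M e (at_least m) <-> card_ge (dom M) m.
Proof.
rewrite /at_least sat_exists_distinct.
by split=> [[s [s_uniq s_len _]]|[s [s_uniq s_len]]]; exists s; split.
Qed.

(** * Separating sentences *)

Lemma T_Sigma_Th S (M : structure S) : T_Sigma S (Th M).
Proof. by exists M. Qed.

Lemma Th_card_le {S : signature} {M1 M2 : structure S} {n1 n2 : nat} :
  card_eq (dom M1) n1 -> card_eq (dom M2) n2 -> Th M1 = Th M2 -> n1 <= n2.
Proof.
move=> [M1_n1 _] M2_n2 Th12.
have : Th M2 (at_least n1).
  by rewrite -Th12; split=> [|e]; [apply: at_least_sentence | apply/sat_at_least].
by case=> _ /(_ (fun=> dom_inh M2)) /sat_at_least /(card_eq_ge M2_n2).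
Qed.

Lemma infinite_family_of_injective {S : signature} {F : theory S -> Prop}
    {T : nat -> theory S} :
  (forall k, F (T k)) -> injective T -> infinite_family F.
Proof.
move=> FT T_inj [l l_cover].
have T_uniq : List.NoDup (List.map T (List.seq 0 (length l).+1)).
  by apply: List.NoDup_map_NoDup_ForallPairs (List.seq_NoDup _ _) => i k _ _; apply: T_inj.
have T_sub : List.incl (List.map T (List.seq 0 (length l).+1)) l.
  move=> _ /List.in_map_iff [k [<- _]].
  have [T' T'_l T_T'] := l_cover _ (FT k).
  suff -> : T k = T' by [].
  by apply: functional_extensionality => phi; apply: propositional_extensionality.
have := List.NoDup_incl_length T_uniq T_sub.
by rewrite List.length_map List.length_seq; lia.
Qed.

Lemma infinite_family_of_card {S : signature} {F : theory S -> Prop}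
    {M : nat -> structure S} {c : nat} :
  (forall k, F (Th (M k))) -> (forall k, card_eq (dom (M k)) (c + k)) ->
  infinite_family F.
Proof.
move=> FM cardM; apply: (infinite_family_of_injective (T := fun k => Th (M k)) FM).
move=> k1 k2 Th12; have := Th_card_le (cardM k1) (cardM k2) Th12.
by have := Th_card_le (cardM k2) (cardM k1) (esym Th12); lia.
Qed.

Lemma not_e_minimal_of_separating S (phi : form S) (M1 M2 : nat -> structure S) c :
  sentence phi -> (forall k e, sat (M1 k) e phi) -> (forall k e, ~ sat (M2 k) e phi) ->
  (forall k, card_eq (dom (M1 k)) (c + k)) -> (forall k, card_eq (dom (M2 k)) (c + k)) ->
  ~ e_minimal (T_Sigma S).
Proof.
move=> phi_sent M1_phi M2_phi card1 card2 [_ /(_ phi phi_sent) [] fin].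
- apply: (infinite_family_of_card _ card1) fin => k.
  by split; [apply: T_Sigma_Th | split=> // e; apply: M1_phi].
- apply: (infinite_family_of_card _ card2) fin => k.
  by split; [apply: T_Sigma_Th | split=> // e; apply: M2_phi].
Qed.

Definition fin_structure {S : signature} (n : nat) (R : Prop)
    (fi : forall f : Fsym S, ('I_(far f) -> 'I_n.+1) -> 'I_n.+1) : structure S :=
  @Structure S 'I_n.+1 ord0 (fun _ _ => R) fi.

Lemma card_eq_fin_structure S n R fi : card_eq (dom (@fin_structure S n R fi)) n.+1.
Proof. exact/card_eq_ord. Qed.

(* [s(x_0, .., x_0)]; for [s = inr f] it reads [f(x_0, .., x_0) = x_0]. *)
Definition diag_atom {S : signature} (s : rsym' S) : form S := FRel s (fun=> 0).

Lemma free_diag_atom S x (s : rsym' S) : free_in x (diag_atom s) -> x = 0.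
Proof. by case=> i <-. Qed.

Lemma rel_not_e_minimal {S : signature} (r : Rsym S) : ~ e_minimal (T_Sigma S).
Proof.
apply: (@not_e_minimal_of_separating _ (FAll 0 (diag_atom (inl r)))
  (fun k => fin_structure k True (fun _ _ => ord0))
  (fun k => fin_structure k False (fun _ _ => ord0)) 1).
- by move=> x [x_0 /free_diag_atom].
- by [].
- by move=> k e /(_ ord0).
- by move=> k; apply: card_eq_fin_structure.
- by move=> k; apply: card_eq_fin_structure.
Qed.

Definition first_arg {T : Type} (t : T) (n : nat) : ('I_n -> T) -> T :=
  if n is n'.+1 then fun v => v ord0 else fun=> t.

Lemma fun_not_e_minimal {S : signature} (g : Fsym S) : 0 < far g -> ~ e_minimal (T_Sigma S).
Proof.
move=> g_pos.
apply: (@not_e_minimal_of_separating _ (FAll 0 (diag_atom (inr g)))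
  (fun k => fin_structure k.+1 True (fun f => first_arg ord0 (far f)))
  (fun k => fin_structure k.+1 True (fun _ _ => ord0)) 2).
- by move=> x [x_0 /free_diag_atom].
- by move=> k e d /=; case: (far g) g_pos.
- by move=> k e /(_ ord_max) /(congr1 val).
- by move=> k; apply: card_eq_fin_structure.
- by move=> k; apply: card_eq_fin_structure.
Qed.

Lemma two_funs_not_e_minimal {S : signature} {f g : Fsym S} : f <> g -> ~ e_minimal (T_Sigma S).
Proof.
move=> f_g.
pose fi k (h : Fsym S) (_ : 'I_(far h) -> 'I_k.+2) : 'I_k.+2 :=
  if excluded_middle_informative (h = f) is left _ then ord0 else ord_max.
apply: (@not_e_minimal_of_separating _ (FEx 0 (FAnd (diag_atom (inr f)) (diag_atom (inr g))))
  (fun k => fin_structure k.+1 True (fun _ _ => ord0))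
  (fun k => fin_structure k.+1 True (fi k)) 2).
- by move=> x [x_0 [/free_diag_atom|/free_diag_atom]].
- by move=> k e; exists ord0.
- move=> k e [d []] /=; rewrite /fi !upd_eq.
  case: (excluded_middle_informative (f = f)) => [_ <-|/(_ erefl) []].
  case: (excluded_middle_informative (g = f)) => [/esym //|_].
  by move/(congr1 val).
- by move=> k; apply: card_eq_fin_structure.
- by move=> k; apply: card_eq_fin_structure.
Qed.

(** * Signatures with at most one constant *)

Definition at_most_one_constant (S : signature) : Prop :=
  [/\ Rsym S -> False, forall f : Fsym S, far f = 0 & forall f g : Fsym S, f = g].

Lemma at_most_one_constantE S :
  at_most_one_constant S <-> empty_signature S \/ one_constant_signature S.
Proof.
split=> [[no_rel far0 fsym_eq]|[[no_rel no_fun]|[no_rel [c [c0 all_c]]]]].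
- case: (classic (exists c : Fsym S, True)) => [[c _]|no_fun].
  + by right; split=> //; exists c; split.
  + by left; split=> // f; apply: no_fun; exists f.
- by split=> // f; case: (no_fun f).
- by split=> // [f|f g]; [rewrite (all_c f) | rewrite (all_c f) (all_c g)].
Qed.

Lemma at_most_one_constant_of_e_minimal S :
  e_minimal (T_Sigma S) -> at_most_one_constant S.
Proof.
move=> emin; split.
- by move=> r; apply: (rel_not_e_minimal r).
- by move=> f; apply: NNPP => far_f; apply: (fun_not_e_minimal f _ emin); lia.
- by move=> f g; apply: NNPP => f_g; apply: two_funs_not_e_minimal f_g emin.
Qed.

Section AtMostOneConstant.

Context {S : signature} (S_const : at_most_one_constant S).

Lemma fint_related_exists (A B : structure S) :
  exists P : list (dom A * dom B), [/\ partial_bij P, fint_related P & length P <= 1].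
Proof.
have [_ far0 fsym_eq] := S_const.
have args_eq (T : Type) n (v w : 'I_n -> T) : n = 0 -> v = w.
  by move=> n0; subst n; apply: functional_extensionality => i; have := ltn_ord i.
case: (classic (exists c : Fsym S, True)) => [[c _]|no_fun].
- exists [:: (fint A c (fun=> dom_inh A), fint B c (fun=> dom_inh B))]; split=> //.
  + by move=> p q [<-|[]] [<-|[]].
  + move=> f v w; have f_c := fsym_eq f c; subst f; left.
    by rewrite (args_eq _ _ v (fun=> dom_inh A)) ?(args_eq _ _ w (fun=> dom_inh B)).
- by exists [::]; split=> // f; case: no_fun; exists f.
Qed.

Lemma sat_iff_of_card_agree {A B : structure S} {N : nat} {psi : form S} {e e'} :
  card_agree_upto (dom A) (dom B) N -> sentence psi -> quant_depth psi < N ->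
  sat A e psi <-> sat B e' psi.
Proof.
move=> agreeAB psi_sent lt_psi_N; have [no_rel _ _] := S_const.
have [P [bijP relP lenP]] := fint_related_exists A B.
apply: (ef_equiv_of_card_agree no_rel agreeAB psi P e e' bijP relP) => [x /psi_sent []|]; lia.
Qed.

Definition nat_model : structure S := @Structure S nat 0 (fun _ _ => False) (fun _ _ => 0).

Definition fin_model (k : nat) : structure S := fin_structure k False (fun _ _ => ord0).

Lemma sat_nat_model_of_card_ge {M : structure S} {psi : form S} {e e'} :
  sentence psi -> card_ge (dom M) (quant_depth psi).+1 ->
  sat M e psi <-> sat nat_model e' psi.
Proof.
move=> psi_sent M_big; apply: (sat_iff_of_card_agree _ psi_sent (ltnSn _)) => j le_j.
by split=> _; [apply: card_ge_nat | apply: card_ge_le M_big le_j].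
Qed.

Lemma Th_fin_model_of_card_eq (M : structure S) k :
  card_eq (dom M) k.+1 -> forall phi, Th M phi <-> Th (fin_model k) phi.
Proof.
move=> M_k phi.
have agree N : card_agree_upto (dom M) (dom (fin_model k)) N.
  by move=> j _; rewrite (card_eq_ge M_k) card_ge_ord.
split=> -[phi_sent sat_phi]; split=> // e.
- apply/(sat_iff_of_card_agree (agree _) phi_sent (ltnSn _)).
  exact: (sat_phi (fun=> dom_inh M)).
- apply/(sat_iff_of_card_agree (agree _) phi_sent (ltnSn _)).
  exact: (sat_phi (fun=> ord0)).
Qed.

Lemma T_Sigma_restr_finite (psi : form S) :
  sentence psi -> ~ sat nat_model (fun=> 0) psi ->
  finite_family (fam_restr (T_Sigma S) psi).
Proof.
move=> psi_sent not_nat.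
exists (List.map (fun k => Th (fin_model k)) (List.seq 0 (quant_depth psi))).
move=> T [[M TM] /TM [_ M_psi]].
case: (card_ge_or_eq (dom M) (quant_depth psi).+1) => [M_big|[[|k] lt_k M_k]].
- case: not_nat; apply/(sat_nat_model_of_card_ge psi_sent M_big).
  exact: (M_psi (fun=> dom_inh M)).
- by case: M_k => _ []; apply: card_ge1 (dom_inh M).
- exists (Th (fin_model k)).
  + by apply/List.in_map_iff; exists k; split=> //; apply/List.in_seq; lia.
  + by move=> phi; rewrite TM; apply: Th_fin_model_of_card_eq.
Qed.

Lemma T_Sigma_e_minimal : e_minimal (T_Sigma S).
Proof.
split.
- apply: (infinite_family_of_card (M := fin_model) (c := 1)) => k.
  + exact: T_Sigma_Th.
  + exact: card_eq_fin_structure.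
- move=> phi phi_sent; case: (classic (sat nat_model (fun=> 0) phi)) => [nat_phi|nat_nphi].
  + by right; apply: T_Sigma_restr_finite => // /(_ nat_phi).
  + by left; apply: T_Sigma_restr_finite.
Qed.

End AtMostOneConstant.

Theorem theorem2p1 (S : signature) :
  e_minimal (T_Sigma S) <-> empty_signature S \/ one_constant_signature S.
Proof.
rewrite -at_most_one_constantE; split; first exact: at_most_one_constant_of_e_minimal.
exact: T_Sigma_e_minimal.
Qed.
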